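(* For every $\epsilon>0$, no impartial selection mechanism (deterministic or randomized, and possibly returning no winner with positive probability) has approximation ratio better than $2-\epsilon$ against all uniform priors; that is, for every such mechanism $f$ there is a uniform prior $\mathbf{P}$ with $\frac{\mathbb{E}_{\mathbf{x}\sim\mathbf{P}}[\Delta(\mathbf{x})]}{\mathbb{E}_{\mathbf{x}\sim\mathbf{P}}[d_{f(\mathbf{x})}(\mathbf{x})]}>2-\epsilon$. (In fact, two-node uniform instances with sufficiently small popularity $p$ suffice.)
   Context: A nomination profile on a finite agent set $N$ is a directed graph $\mathbf{x}$ on $N$ without self-loops; $d_j(\mathbf{x})$ is the in-degree of $j$ and $\Delta(\mathbf{x})=\max_j d_j(\mathbf{x})$. A (randomized) selection mechanism maps each profile to a probability distribution over $N\cup\{\text{no winner}\}$; it is impartial if for every agent $i$, every profile $\mathbf{x}$, and every alternative set $x_i'$ of outgoing edges of $i$, the probability that $i$ is selected is the same at $\mathbf{x}$ and at the profile obtained by replacing $i$'s outgoing edges with $x_i'$. The in-degree of ''no winner'' is taken as $0$, and $\mathbb{E}[d_{f(\mathbf{x})}(\mathbf{x})]$ is over both the profile and the mechanism's randomness. Uniform prior with popularity $p$: each directed edge $(i,j)$, $i\neq j$, is present independently with probability $p$. *)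

From mathcomp Require Import all_boot all_order all_algebra.
From mathcomp Require Import reals.
Set Implicit Arguments. Unset Strict Implicit. Unset Printing Implicit Defensive.
Import Order.TTheory GRing.Theory Num.Theory.
Local Open Scope ring_scope.

(* A profile on the agent set N = 'I_n : x i is the set of agents nominated
   by i (outgoing edges of i). *)
Definition profile (n : nat) := {ffun 'I_n -> {set 'I_n}}.

Definition valid_profile n (x : profile n) : bool := [forall i, i \notin x i].

Definition indeg n (x : profile n) (j : 'I_n) : nat := #|[set i | j \in x i]|.

(* Maximum in-degree Delta(x) (0 if n = 0). *)
Definition maxdeg n (x : profile n) : nat := \max_(j : 'I_n) indeg x j.

Definition replace_out n (x : profile n) (i : 'I_n) (S : {set 'I_n}) : profile n :=
  [ffun k => if k == i then S else x k].

(* A randomized selection mechanism on N = 'I_n: for each profile, a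
   distribution over N ∪ {no winner}, encoded as option 'I_n (None = no winner). *)
Definition mechanism (R : realType) (n : nat) := profile n -> option 'I_n -> R.

Definition is_lottery_mech (R : realType) n (f : mechanism R n) : Prop :=
  forall x : profile n, valid_profile x ->
    (forall o, 0 <= f x o) /\ \sum_(o : option 'I_n) f x o = 1.

Definition impartial (R : realType) n (f : mechanism R n) : Prop :=
  forall (x : profile n) (i : 'I_n) (S : {set 'I_n}),
    valid_profile x -> i \notin S ->
    f (replace_out x i S) (Some i) = f x (Some i).

(* Uniform prior with popularity p: each edge (i,j), i<>j, present independently
   with probability p. *)
Definition uprob (R : realType) n (p : R) (x : profile n) : R :=
  \prod_(i : 'I_n) \prod_(j : 'I_n | j != i) (if j \in x i then p else 1 - p).

Definition E_maxdeg (R : realType) n (p : R) : R :=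
  \sum_(x : profile n | valid_profile x) uprob p x * (maxdeg x)%:R.

(* E[d_{f(x)}(x)], "no winner" having in-degree 0. *)
Definition E_seldeg (R : realType) n (p : R) (f : mechanism R n) : R :=
  \sum_(x : profile n | valid_profile x)
     uprob p x * \sum_(j : 'I_n) f x (Some j) * (indeg x j)%:R.

From mathcomp Require Import all_boot all_order all_algebra.
From mathcomp Require Import reals.
From mathcomp Require Import lra ring.
Set Implicit Arguments. Unset Strict Implicit. Unset Printing Implicit Defensive.
Import Order.TTheory GRing.Theory Num.Theory.
Local Open Scope ring_scope.

(* On N = {a0, a1} a nomination profile is determined by two bits: whether
   a0 nominates a1 and whether a1 nominates a0.  Impartiality says that the
   probability of selecting a0 cannot depend on a0's own edge, hence only
   on whether a0 is nominated.  Since a selected agent contributes to the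
   expected selected in-degree only when it is nominated, every impartial
   lottery satisfies  E[d_f] = p * (u + v),  where u, v are the selection
   probabilities of a0, a1 at the complete profile; so  0 <= E[d_f] <= p.
   On the other hand  E[Delta] = P(some edge) = p * (2 - p).  Choosing
   p = eps / (eps + 2) < min(1, eps) gives  (2 - eps) E[d_f] < E[Delta]. *)

Lemma sum_option (V : nmodType) (T : finType) (F : option T -> V) :
  \sum_(o : option T) F o = F None + \sum_(j : T) F (Some j).
Proof.
rewrite (bigD1 None) //= (reindex_omap Some id) => [|[] //].
by under eq_bigl do rewrite eqxx.
Qed.

Lemma lottery_winner_mass (R : realType) n (f : mechanism R n) (x : profile n) :
  is_lottery_mech f -> valid_profile x ->
  0 <= \sum_(j : 'I_n) f x (Some j) <= 1.
Proof.
move=> hlot vx; have [hpos hsum] := hlot x vx.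
apply/andP; split; first by apply: sumr_ge0 => j _; exact: hpos.
by rewrite -hsum sum_option lerDr.
Qed.

Section TwoAgents.

Variable R : realType.

Definition a0 : 'I_2 := ord0.
Definition a1 : 'I_2 := ord_max.

Lemma agent2_cases (k : 'I_2) : k = a0 \/ k = a1.
Proof. by case: k => [[|[|k]] Hk]; [left|right|]; try exact: val_inj. Qed.

Definition nom (b : bool) (j : 'I_2) : {set 'I_2} := if b then [set j] else set0.

Definition prof2 (b0 b1 : bool) : profile 2 :=
  [ffun k => if k == a0 then nom b0 a1 else nom b1 a0].

Definition bits2 (x : profile 2) : bool * bool := (a1 \in x a0, a0 \in x a1).

Lemma valid_prof2 b0 b1 : valid_profile (prof2 b0 b1).
Proof.
apply/forallP => i; rewrite ffunE /nom.
by case: (agent2_cases i) => ->; rewrite /= ?eqxx; case: ifP; rewrite ?inE.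
Qed.

Lemma bits2_prof2 b0 b1 : bits2 (prof2 b0 b1) = (b0, b1).
Proof. by rewrite /bits2 !ffunE /nom; case: b0; case: b1; rewrite ?inE. Qed.

Lemma prof2_bits x : valid_profile x -> x = prof2 (bits2 x).1 (bits2 x).2.
Proof.
move/forallP => noloop; apply/ffunP => k; rewrite ffunE; apply/setP => j.
have n0 := noloop a0; have n1 := noloop a1.
case: (agent2_cases k) => ->; case: (agent2_cases j) => -> /=; rewrite /nom.
- by case: ifP => _; rewrite ?inE // (negbTE n0).
- by case: ifP => H; rewrite ?inE ?eqxx ?H.
- by case: ifP => H; rewrite ?inE ?eqxx ?H.
- by case: ifP => _; rewrite ?inE // (negbTE n1).
Qed.

Lemma sum_valid_prof2 (F : profile 2 -> R) :
  \sum_(x : profile 2 | valid_profile x) F x =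
  \sum_(b0 : bool) \sum_(b1 : bool) F (prof2 b0 b1).
Proof.
rewrite (partition_big bits2 predT) //= pair_big /=.
apply: eq_bigr => -[b0 b1] _; rewrite (big_pred1 (prof2 b0 b1)) // => x /=.
apply/idP/eqP => [/andP[vx /eqP hb] | ->]; first by rewrite (prof2_bits vx) hb.
by rewrite valid_prof2 bits2_prof2 eqxx.
Qed.

Definition coin (p : R) (b : bool) : R := if b then p else 1 - p.

Lemma uprob_prof2 (p : R) b0 b1 : uprob p (prof2 b0 b1) = coin p b0 * coin p b1.
Proof.
rewrite /uprob big_ord_recl big_ord1.
rewrite !(big_mkcond (fun j : 'I_2 => j != _)) !big_ord_recl !big_ord0 /=.
have -> : lift ord0 ord0 = a1 by apply: val_inj.
rewrite !mul1r !mulr1 !ffunE /nom /coin.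
by case: b0; case: b1; rewrite ?inE.
Qed.

Lemma indeg_prof2_a0 b0 b1 : indeg (prof2 b0 b1) a0 = b1.
Proof.
rewrite /indeg (_ : [set i | a0 \in prof2 b0 b1 i] = nom b1 a1).
  by rewrite /nom; case: b1; rewrite ?cards1 ?cards0.
apply/setP => i; rewrite !inE !ffunE /nom.
by case: (agent2_cases i) => -> /=; case: b0; case: b1; rewrite ?inE.
Qed.

Lemma indeg_prof2_a1 b0 b1 : indeg (prof2 b0 b1) a1 = b0.
Proof.
rewrite /indeg (_ : [set i | a1 \in prof2 b0 b1 i] = nom b0 a0).
  by rewrite /nom; case: b0; rewrite ?cards1 ?cards0.
apply/setP => i; rewrite !inE !ffunE /nom.
by case: (agent2_cases i) => -> /=; case: b0; case: b1; rewrite ?inE.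
Qed.

Lemma sum_agents2 (F : 'I_2 -> R) : \sum_(j : 'I_2) F j = F a0 + F a1.
Proof.
rewrite big_ord_recl big_ord1.
by have -> : lift ord0 ord0 = a1 by apply: val_inj.
Qed.

Lemma maxdeg_prof2 b0 b1 : maxdeg (prof2 b0 b1) = (b0 || b1).
Proof.
rewrite /maxdeg big_ord_recl big_ord1.
have -> : lift ord0 ord0 = a1 by apply: val_inj.
by rewrite -/a0 indeg_prof2_a0 indeg_prof2_a1; case: b0; case: b1.
Qed.

Lemma E_maxdeg2 (p : R) : E_maxdeg 2 p = p * (2 - p).
Proof.
rewrite /E_maxdeg sum_valid_prof2 !big_bool /=.
rewrite !maxdeg_prof2 !uprob_prof2 /coin /=; ring.
Qed.

Lemma impartial_prof2_a0 (g : mechanism R 2) :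
  impartial g -> forall b0 b0' b1, g (prof2 b0' b1) (Some a0) = g (prof2 b0 b1) (Some a0).
Proof.
move=> himp b0 b0' b1.
have -> : prof2 b0' b1 = replace_out (prof2 b0 b1) a0 (nom b0' a1).
  by apply/ffunP => k; rewrite !ffunE; case: (agent2_cases k) => ->.
by apply: himp; [exact: valid_prof2 | rewrite /nom; case: b0'; rewrite ?inE].
Qed.

Lemma impartial_prof2_a1 (g : mechanism R 2) :
  impartial g -> forall b0 b1 b1', g (prof2 b0 b1') (Some a1) = g (prof2 b0 b1) (Some a1).
Proof.
move=> himp b0 b1 b1'.
have -> : prof2 b0 b1' = replace_out (prof2 b0 b1) a1 (nom b1' a0).
  by apply/ffunP => k; rewrite !ffunE; case: (agent2_cases k) => ->.
by apply: himp; [exact: valid_prof2 | rewrite /nom; case: b1'; rewrite ?inE].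
Qed.

(* Under impartiality, E[d_f] is p times the probability that the complete
   profile has a winner, which is at most p. *)
Lemma E_seldeg2_bounds (p : R) (g : mechanism R 2) :
  0 <= p -> is_lottery_mech g -> impartial g -> 0 <= E_seldeg p g <= p.
Proof.
move=> hp hlot himp.
set u := g (prof2 true true) (Some a0); set v := g (prof2 true true) (Some a1).
have E_sel : E_seldeg p g = p * (u + v).
  rewrite /E_seldeg sum_valid_prof2 !big_bool /=.
  rewrite !uprob_prof2 !sum_agents2 !indeg_prof2_a0 !indeg_prof2_a1 /=.
  rewrite (impartial_prof2_a0 himp true false true).
  rewrite (impartial_prof2_a1 himp true true false) -/u -/v /coin; ring.
have := lottery_winner_mass hlot (valid_prof2 true true).
rewrite sum_agents2 -/u -/v E_sel => /andP[huv0 huv1].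
by rewrite mulr_ge0 //= ler_piMr.
Qed.

End TwoAgents.

Theorem mainTheorem19 (R : realType) (eps : R) (heps : 0 < eps)
    (f : forall n : nat, mechanism R n)
    (hlot : forall n, is_lottery_mech (f n))
    (himp : forall n, impartial (f n)) :
  exists (n : nat) (p : R), 0 <= p <= 1 /\
    (2 - eps) * E_seldeg p (f n) < E_maxdeg n p.
Proof.
pose p := eps / (eps + 2).
have he2 : 0 < eps + 2 by rewrite addr_gt0.
have hp0 : 0 < p by rewrite divr_gt0.
have hp1 : p < 1 by rewrite ltr_pdivrMr // mul1r ltrDl.
have hpeps : p < eps by rewrite ltr_pdivrMr // ltr_pMr //; lra.
exists 2%N, p; split; first by rewrite !ltW.
have /andP[hs0 hsp] := E_seldeg2_bounds (ltW hp0) (hlot 2%N) (himp 2%N).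
have hmax : 0 < p * (2 - p) by rewrite mulr_gt0 //; lra.
rewrite E_maxdeg2; have [heps2 | heps2] := lerP (2 - eps) 0.
  by apply: le_lt_trans hmax; rewrite mulrC mulr_ge0_le0.
apply: (le_lt_trans (ler_wpM2l (ltW heps2) hsp)).
by rewrite mulrC ltr_pM2l //; lra.
Qed.
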